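(* Let $\mathfrak{G}$ be a CFSTR and let $G$ be its non-flow subnetwork. The following are equivalent: (1) $\mathfrak{G}$ passes the Jacobian Criterion; (2) every square embedded network of $G$ has nonnegative orientation; (3) $G$ has no self-catalyzing reaction, and every square embedded network $N$ of $G$ satisfying both of the following has nonnegative orientation: (a) $N$ contains no outflow reaction $X_i\to0$, no inflow reaction $0\to X_i$, no generalized inflow reaction $0\to\sum_i a_iX_i$ ($a_i\ge0$), and no reaction of the form $aX_i\to bX_i$ with $0\le b\le a$; (b) each species of $N$ appears in at least two reactions of $N$, where a reaction together with its reverse is counted only once.
   Context: A chemical reaction network has species $X_1,\dots,X_s$ and reactions $y\to y'$ with complexes $y,y'\in\mathbb{Z}_{\ge0}^s$, $y\ne y'$; $y_i$ is the stoichiometric coefficient of $X_i$ in $y$. A flow reaction is $0\to X_i$ (inflow) or $X_i\to0$ (outflow); other reactions are non-flow. A CFSTR contains the outflow $X_i\to0$ for every species; its non-flow subnetwork consists of all its non-flow reactions. A reaction $y\to y'$ is self-catalyzing if some species $X_j$ has $1\le y_j<y'_j$. Square networks: for a list of $n$ reactions $y_k\to y_k'$ on $n$ species, the reactant matrix $M$ has $k$-th row $y_k$, the reaction matrix $R$ has $k$-th row $y_k-y_k'$, and the orientation is $\operatorname{Or}=\operatorname{sign}(\det M\det R)$; the empty network has orientation $+1$. Square embedded networks: for $0\le k\le s$, a $k$-square embedded network of $G$ is determined by a $k$-element set $S$ of species and a $k$-element set of non-flow reactions of $G$; it is the square network with species set $S$ whose $k$ reactions are obtained from the chosen reactions by deleting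 from both complexes all species not in $S$ (kept as a list, so repeated reactions may occur). Jacobian Criterion: a CFSTR with $s$ species passes it if for every choice of $s$ distinct reactions, none an inflow, the $s\times s$ reactant and reaction matrices of these reactions (columns indexed by all species) give nonnegative orientation. *)

From HB Require Import structures.
From mathcomp Require Import all_boot all_order all_algebra.
Set Implicit Arguments. Unset Strict Implicit. Unset Printing Implicit Defensive.
Import Order.TTheory GRing.Theory Num.Theory.
Local Open Scope ring_scope.

(* Species of a network on n species are indexed by 'I_n.
   A complex is a vector in Z_{>=0}^n; a reaction y -> y' is the pair (y, y'). *)
Definition cplx (n : nat) := {ffun 'I_n -> nat}.
Definition rxn (n : nat) := (cplx n * cplx n)%type.

Definition zero_cplx (n : nat) : cplx n := [ffun => 0%N].
Definition unit_cplx (n : nat) (i : 'I_n) : cplx n := [ffun j => (j == i : nat)].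

Definition is_inflow n (r : rxn n) : bool :=
  (r.1 == zero_cplx n) && [exists i, r.2 == unit_cplx i].
Definition is_outflow n (r : rxn n) : bool :=
  [exists i, r.1 == unit_cplx i] && (r.2 == zero_cplx n).
Definition is_flow n (r : rxn n) : bool := is_inflow r || is_outflow r.

Definition is_network n (net : seq (rxn n)) : Prop :=
  uniq net /\ (forall r, r \in net -> r.1 != r.2).

Definition is_CFSTR n (net : seq (rxn n)) : Prop :=
  is_network net /\ (forall i : 'I_n, (unit_cplx i, zero_cplx n) \in net).

Definition nonflow_sub n (net : seq (rxn n)) : seq (rxn n) :=
  [seq r <- net | ~~ is_flow r].

Definition self_catalyzing n (r : rxn n) : bool :=
  [exists j, (1 <= r.1 j)%N && (r.1 j < r.2 j)%N].

Definition reactant_mx n (r : 'I_n -> rxn n) : 'M[int]_n :=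
  \matrix_(k, i) ((r k).1 i)%:Z.
Definition reaction_mx n (r : 'I_n -> rxn n) : 'M[int]_n :=
  \matrix_(k, i) (((r k).1 i)%:Z - ((r k).2 i)%:Z).
Definition orientation n (r : 'I_n -> rxn n) : int :=
  sgz (\det (reactant_mx r) * \det (reaction_mx r)).

Definition passes_Jacobian s (net : seq (rxn s)) : Prop :=
  forall r : 'I_s -> rxn s, injective r -> (forall k, r k \in net) ->
    (forall k, ~~ is_inflow (r k)) -> 0 <= orientation r.

(* Square embedded networks: species set given by an injective S : 'I_k -> 'I_s
   (its image, in some order), reactions by an injective rs : 'I_k -> reactions
   of G (a k-element set of reactions of G, in some order); restriction keeps
   only the species in S. *)
Definition embed s k (S : 'I_k -> 'I_s) (rs : 'I_k -> rxn s) : 'I_k -> rxn k :=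
  fun p => ([ffun j => (rs p).1 (S j)], [ffun j => (rs p).2 (S j)]).

Definition is_embedding_data s (G : seq (rxn s)) k (S : 'I_k -> 'I_s)
  (rs : 'I_k -> rxn s) : Prop :=
  injective S /\ injective rs /\ (forall p, rs p \in G).

Definition all_embedded_nonneg s (G : seq (rxn s)) : Prop :=
  forall k (S : 'I_k -> 'I_s) (rs : 'I_k -> rxn s),
    is_embedding_data G S rs -> 0 <= orientation (embed S rs).

Definition is_gen_inflow n (r : rxn n) : bool := r.1 == zero_cplx n.
Definition is_single_species_degradation n (r : rxn n) : bool :=
  [exists i, [forall j, (j != i) ==> (r.1 j == 0%N) && (r.2 j == 0%N)]
             && (r.2 i <= r.1 i)%N].
Definition cond_a n (N : 'I_n -> rxn n) : Prop :=
  forall p, ~~ [|| is_outflow (N p), is_inflow (N p), is_gen_inflow (N p)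
                 | is_single_species_degradation (N p)].

Definition appears n (r : rxn n) (j : 'I_n) : bool := (r.1 j != 0%N) || (r.2 j != 0%N).
Definition rev_rxn n (r : rxn n) : rxn n := (r.2, r.1).
Definition cond_b n (N : 'I_n -> rxn n) : Prop :=
  forall j : 'I_n, exists p q : 'I_n,
    [/\ p != q, appears (N p) j, appears (N q) j & N q != rev_rxn (N p)].

Definition cond3 s (G : seq (rxn s)) : Prop :=
  (forall r, r \in G -> ~~ self_catalyzing r) /\
  (forall k (S : 'I_k -> 'I_s) (rs : 'I_k -> rxn s),
    is_embedding_data G S rs ->
    cond_a (embed S rs) -> cond_b (embed S rs) ->
    0 <= orientation (embed S rs)).

From HB Require Import structures.
From mathcomp Require Import all_boot all_order all_algebra ring.
Import Order.TTheory GRing.Theory Num.Theory.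
Set Implicit Arguments. Unset Strict Implicit. Unset Printing Implicit Defensive.
Local Open Scope ring_scope.

(* Everything rests on Laplace expansion of the reactant matrix M and the
   reaction matrix R of a square network.  If reaction p involves only
   species j, or species j occurs only in reaction p, both determinants
   expand along the same entry, and the orientation factors as
   sgz (y_j (y_j - y'_j)) times the orientation of the minor obtained by
   deleting reaction p and species j.  The factor is nonnegative unless
   reaction p is self-catalyzing at j, and equals 1 for an outflow X_j -> 0.
   The orientation vanishes when some reactant row or column is zero or
   when two reactions are reverse to each other.

   (1) -> (2): padding an embedded network with the outflows of the
   missing species preserves its orientation, up to a permutation of the
   species, and yields a full choice of non-inflow reactions of the CFSTR.
   (2) -> (1): an outflow restricts to a degradation or to a reaction with
   zero reactant, so by induction it never makes an orientation negative.
   (2) <-> (3): a self-catalyzing reaction is a negative 1x1 embedded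
   network; conversely a negative embedded network all of whose minors are
   nonnegative satisfies conditions (a) and (b), by the factorisations. *)

Section Determinants.
Variables (R : comPzRingType) (n : nat).
Implicit Type A : 'M[R]_n.

Lemma det_single_row A p j :
  (forall j', j' != j -> A p j' = 0) -> \det A = A p j * cofactor A p j.
Proof.
move=> Hrow; rewrite (expand_det_row A p) (bigD1 j) //= big1 ?addr0 //.
by move=> j' /Hrow ->; rewrite mul0r.
Qed.

Lemma det_single_col A p j :
  (forall p', p' != p -> A p' j = 0) -> \det A = A p j * cofactor A p j.
Proof.
move=> Hcol; rewrite (expand_det_col A j) (bigD1 p) //= big1 ?addr0 //.
by move=> p' /Hcol ->; rewrite mul0r.
Qed.

Lemma det_opposite_rows A p q :
  p != q -> (forall i, A q i = - A p i) -> \det A = 0.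
Proof.
move=> npq Hopp.
pose B := \matrix_(i, j) (if i == q then A p j else A i j).
have -> : \det A = (-1) * \det B + 0 * \det A.
  apply: (determinant_multilinear (i0 := q)) => //.
    by apply/rowP => j; rewrite !mxE eqxx Hopp; ring.
  by apply/matrixP => i j; rewrite !mxE eq_sym (negbTE (neq_lift q i)).
rewrite (@determinant_alternate _ _ B p q) ?mulr0 ?mul0r ?addr0 //.
by move=> j; rewrite !mxE (negbTE npq) eqxx.
Qed.

End Determinants.

Section SquareNetwork.
Variable n : nat.
Implicit Type r : 'I_n -> rxn n.

Lemma reactant_mxE r p j : reactant_mx r p j = ((r p).1 j)%:Z.
Proof. by rewrite mxE. Qed.

Lemma reaction_mxE r p j :
  reaction_mx r p j = ((r p).1 j)%:Z - ((r p).2 j)%:Z.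
Proof. by rewrite mxE. Qed.

Lemma orientation_eqfun r1 r2 : r1 =1 r2 -> orientation r1 = orientation r2.
Proof.
move=> eq_r; rewrite /orientation.
have -> : reactant_mx r1 = reactant_mx r2.
  by apply/matrixP => p j; rewrite !mxE eq_r.
have -> : reaction_mx r1 = reaction_mx r2.
  by apply/matrixP => p j; rewrite !mxE eq_r.
by [].
Qed.

(* A reaction with zero reactant complex gives a zero row of M. *)
Lemma orientation_gen_inflow r p : is_gen_inflow (r p) -> orientation r = 0.
Proof.
move=> /eqP r1p; rewrite /orientation.
suff -> : \det (reactant_mx r) = 0 by rewrite mul0r sgz0.
rewrite (@det_single_row _ _ _ p p) ?reactant_mxE ?r1p ?ffunE ?mul0r //.
by move=> j _; rewrite reactant_mxE r1p ffunE.
Qed.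

(* A species absent from all reactant complexes gives a zero column of M. *)
Lemma orientation_absent_species r j :
  (forall p, (r p).1 j = 0%N) -> orientation r = 0.
Proof.
move=> r1j; rewrite /orientation.
suff -> : \det (reactant_mx r) = 0 by rewrite mul0r sgz0.
rewrite (@det_single_col _ _ _ j j) ?reactant_mxE ?r1j ?mul0r //.
by move=> p _; rewrite reactant_mxE r1j.
Qed.

(* A reaction listed with its reverse gives opposite rows of R. *)
Lemma orientation_reverse_pair r p q :
  p != q -> r q = rev_rxn (r p) -> orientation r = 0.
Proof.
move=> npq rq; rewrite /orientation.
suff -> : \det (reaction_mx r) = 0 by rewrite mulr0 sgz0.
by apply: (det_opposite_rows npq) => i; rewrite !reaction_mxE rq opprB.
Qed.

(* Reordering the species permutes the columns of M and R by the same
   permutation, so its sign cancels. *)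
Lemma orientation_perm (S : 'I_n -> 'I_n) r :
  injective S -> orientation (embed S r) = orientation r.
Proof.
move=> injS; pose sigma := perm.perm injS; rewrite /orientation.
have -> : reactant_mx (embed S r) = col_perm sigma (reactant_mx r).
  by apply/matrixP => p i; rewrite !mxE ffunE perm.permE.
have -> : reaction_mx (embed S r) = col_perm sigma (reaction_mx r).
  by apply/matrixP => p i; rewrite !mxE !ffunE perm.permE.
rewrite !col_permE !det_mulmx det_perm.
set e := (-1) ^+ _; have e2 : e * e = 1 by rewrite -exprMn mulrNN mulr1 expr1n.
congr sgz; transitivity (\det (reactant_mx r) * \det (reaction_mx r) * (e * e)).
  by ring.
by rewrite e2 mulr1.
Qed.

End SquareNetwork.

Lemma not_appears n (r : rxn n) j : ~~ appears r j -> r.1 j = 0%N /\ r.2 j = 0%N.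
Proof. by rewrite /appears negb_or !negbK => /andP [/eqP -> /eqP ->]. Qed.

(* The factor y_j (y_j - y'_j) contributed by expanding M and R at the
   entry of reaction r and species j. *)
Definition weight n (r : rxn n) (j : 'I_n) : int :=
  (r.1 j)%:Z * ((r.1 j)%:Z - (r.2 j)%:Z).

Lemma weight_ge0 n (r : rxn n) j :
  ~~ ((1 <= r.1 j) && (r.1 j < r.2 j))%N -> 0 <= weight r j.
Proof.
rewrite /weight; case: (r.1 j) => [|a] not_cat; first by rewrite mul0r.
by rewrite mulr_ge0 // subr_ge0 lez_nat leqNgt; apply: contra not_cat => ->.
Qed.

Definition sq_minor n (r : 'I_n.+1 -> rxn n.+1) (p j : 'I_n.+1) : 'I_n -> rxn n :=
  embed (lift j) (fun x => r (lift p x)).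

Section Expansion.
Variables (n : nat) (r : 'I_n.+1 -> rxn n.+1).

Lemma orientation_cofactor p j :
  let M := reactant_mx r in let R := reaction_mx r in
  \det M = M p j * cofactor M p j -> \det R = R p j * cofactor R p j ->
  orientation r = sgz (weight (r p) j) * orientation (sq_minor r p j).
Proof.
move=> M R detM detR.
have minorM : row' p (col' j M) = reactant_mx (sq_minor r p j).
  by apply/matrixP => a b; rewrite !mxE ffunE.
have minorR : row' p (col' j R) = reaction_mx (sq_minor r p j).
  by apply/matrixP => a b; rewrite !mxE !ffunE.
have weightE : weight (r p) j = M p j * R p j by rewrite !mxE.
rewrite /orientation detM detR /cofactor minorM minorR weightE -sgzM.
set e := (-1) ^+ _; have e2 : e * e = 1 by rewrite -exprMn mulrNN mulr1 expr1n.
congr sgz; rewrite -[RHS]mulr1 -e2; ring.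
Qed.

Lemma orientation_expand_row p j :
  (forall j', j' != j -> ~~ appears (r p) j') ->
  orientation r = sgz (weight (r p) j) * orientation (sq_minor r p j).
Proof.
move=> only_j; apply: orientation_cofactor; apply: det_single_row => j' /only_j;
  by case/not_appears => r1 r2; rewrite mxE ?r1 ?r2.
Qed.

Lemma orientation_expand_col p j :
  (forall p', p' != p -> ~~ appears (r p') j) ->
  orientation r = sgz (weight (r p) j) * orientation (sq_minor r p j).
Proof.
move=> only_p; apply: orientation_cofactor; apply: det_single_col => p' /only_p;
  by case/not_appears => r1 r2; rewrite mxE ?r1 ?r2.
Qed.

End Expansion.

Lemma degenerate_reaction_nonneg n (r : 'I_n.+1 -> rxn n.+1) p :
  (forall p j, 0 <= orientation (sq_minor r p j)) ->
  is_gen_inflow (r p) || is_single_species_degradation (r p) ->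
  0 <= orientation r.
Proof.
move=> minors_ge0 /orP [/orientation_gen_inflow -> // |].
case/existsP => i /andP [/forallP only_i le_i].
rewrite (@orientation_expand_row _ _ p i).
  apply: mulr_ge0 => //; rewrite sgz_ge0 weight_ge0 //.
  by rewrite (leq_gtF le_i) andbF.
by move=> j /(implyP (only_i j)) /andP [/eqP r1 /eqP r2]; rewrite /appears r1 r2.
Qed.

Lemma sq_minor_embed s n (S : 'I_n.+1 -> 'I_s) (rs : 'I_n.+1 -> rxn s) p j :
  sq_minor (embed S rs) p j =1 embed (S \o lift j) (rs \o lift p).
Proof. by move=> x; congr (_, _); apply/ffunP => b; rewrite !ffunE. Qed.

Lemma embedded_minors_nonneg s (G : seq (rxn s)) n (S : 'I_n.+1 -> 'I_s) rs :
  (forall S' rs', is_embedding_data G S' rs' ->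
     0 <= orientation (@embed s n S' rs')) ->
  is_embedding_data G S rs ->
  forall p j, 0 <= orientation (sq_minor (embed S rs) p j).
Proof.
move=> IH [injS [injrs inG]] p j.
rewrite (orientation_eqfun (sq_minor_embed S rs p j)).
apply: IH; split; last split.
- by move=> x y /injS /lift_inj.
- by move=> x y /injrs /lift_inj.
- by move=> x; apply: inG.
Qed.

Lemma outflow_degradation n (r : rxn n) :
  is_outflow r -> is_single_species_degradation r.
Proof.
case/andP => /existsP [i /eqP r1] /eqP r2; apply/existsP; exists i.
rewrite r1 r2 !ffunE eqxx andbT; apply/forallP => j; apply/implyP => nji.
by rewrite !ffunE (negbTE nji).
Qed.

Lemma embed_degradation s k (S : 'I_k -> 'I_s) (rs : 'I_k -> rxn s) p :
  injective S -> is_single_species_degradation (rs p) ->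
  is_gen_inflow (embed S rs p) || is_single_species_degradation (embed S rs p).
Proof.
move=> injS /existsP [i /andP [/forallP only_i le_i]].
case: (boolP [exists j, S j == i]) => [/existsP [j /eqP Sj] | no_i].
  apply/orP; right; apply/existsP; exists j; rewrite /= !ffunE Sj le_i andbT.
  apply/forallP => j'; apply/implyP => nj'; rewrite !ffunE.
  by apply: (implyP (only_i (S j'))); rewrite -Sj (inj_eq injS).
apply/orP; left; apply/eqP/ffunP => j; rewrite !ffunE.
move: no_i; rewrite negb_exists => /forallP /(_ j) nSj.
by have /implyP /(_ nSj) /andP [/eqP] := only_i (S j).
Qed.

Definition extend T k (f : 'I_k -> T) (x : T) : 'I_k.+1 -> T :=
  fun a => if unlift ord_max a is Some j then f j else x.

Lemma extend_lift T k (f : 'I_k -> T) x j : extend f x (lift ord_max j) = f j.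
Proof. by rewrite /extend liftK. Qed.

Lemma extend_max T k (f : 'I_k -> T) x : extend f x ord_max = x.
Proof. by rewrite /extend unlift_none. Qed.

Lemma extend_inj (T : eqType) k (f : 'I_k -> T) x :
  injective f -> (forall j, f j != x) -> injective (extend f x).
Proof.
move=> injf fresh_x a b; rewrite /extend.
case: (unliftP ord_max a) => [a'|] ->; case: (unliftP ord_max b) => [b'|] -> //=.
- by move/injf ->.
- by move=> fa'; case/eqP: (fresh_x a').
- by move=> fb'; case/eqP: (fresh_x b').
Qed.

Definition outflow s (i : 'I_s) : rxn s := (unit_cplx i, zero_cplx s).

Lemma unit_cplx_neq0 s (i : 'I_s) : (unit_cplx i == zero_cplx s) = false.
Proof. by apply/negbTE/eqP => /ffunP /(_ i); rewrite !ffunE eqxx. Qed.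

(* Adding a fresh species i together with its outflow keeps the orientation:
   expansion along the new reaction has factor 1 and leaves the old network. *)
Lemma orientation_add_outflow s k (S : 'I_k -> 'I_s) (rs : 'I_k -> rxn s) i :
  (forall j, S j != i) ->
  orientation (embed (extend S i) (extend rs (outflow i))) =
  orientation (embed S rs).
Proof.
move=> fresh_i; rewrite (@orientation_expand_row _ _ ord_max ord_max).
  rewrite /weight /= !ffunE !extend_max !ffunE eqxx /= subr0 mulr1 sgzE mul1r.
  apply: orientation_eqfun => p; congr (_, _); apply/ffunP => b;
    by rewrite !ffunE !extend_lift.
move=> j; case: (unliftP ord_max j) => [j' -> _ | ->]; last by rewrite eqxx.
by rewrite /appears /= !ffunE !extend_max extend_lift !ffunE (negbTE (fresh_i j')).
Qed.

Lemma exists_fresh_species k s (S : 'I_k -> 'I_s) :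
  injective S -> (k < s)%N -> exists i, forall j, S j != i.
Proof.
move=> injS lt_ks; case: (pickP [pred i | i \notin codom S]) => [i /= iNS | all_in].
  by exists i => j; apply: contra iNS => /eqP <-; exact: codom_f.
have codomT : codom S =i 'I_s by move=> i; have := all_in i; rewrite /= => /negbFE.
have := card_codom injS; rewrite (eq_card codomT) !card_ord => eq_sk.
by rewrite eq_sk ltnn in lt_ks.
Qed.

Definition noninflow_sub s (net : seq (rxn s)) : seq (rxn s) :=
  [seq r <- net | ~~ is_inflow r].

Lemma all_embedded_sub s (G H : seq (rxn s)) :
  {subset H <= G} -> all_embedded_nonneg G -> all_embedded_nonneg H.
Proof.
move=> subHG nonneg k S rs [injS [injrs inH]]; apply: nonneg.
by split=> //; split=> // p; exact: subHG (inH p).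
Qed.

(* Property (2) survives the addition of outflow reactions: restricted to the
   chosen species an outflow is degenerate, so induct on the size. *)
Lemma all_embedded_add_outflows s (G H : seq (rxn s)) :
  (forall r, r \in H -> (r \in G) || is_outflow r) ->
  all_embedded_nonneg G -> all_embedded_nonneg H.
Proof.
move=> inH_split nonneg; elim=> [|n IH] S rs data; have [injS [injrs inH]] := data.
  by apply: nonneg; split=> //; split=> // -[].
case: (boolP [forall p, rs p \in G]) => [/forallP inG | ].
  by apply: nonneg; split=> //; split.
rewrite negb_forall => /existsP [p pNG].
apply: (@degenerate_reaction_nonneg _ _ p (embedded_minors_nonneg IH data)).
apply: embed_degradation injS _; apply: outflow_degradation.
by have := inH_split _ (inH p); rewrite (negbTE pNG).
Qed.

(* Full square networks are the embedded networks using all species. *)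
Lemma all_embedded_jacobian s (net : seq (rxn s)) :
  all_embedded_nonneg (noninflow_sub net) -> passes_Jacobian net.
Proof.
move=> nonneg r injr in_net no_inflow; rewrite -(@orientation_perm _ id r (@inj_id _)).
by apply: nonneg; split=> //; split=> // p; rewrite mem_filter no_inflow in_net.
Qed.

(* (1) -> (2) for the non-inflow reactions: by induction on the number of
   missing species, pad with outflows of fresh species until all species are
   used; an outflow of a missing species already present gives a zero row. *)
Lemma jacobian_all_embedded s (net : seq (rxn s)) :
  (forall i, outflow i \in net) -> passes_Jacobian net ->
  all_embedded_nonneg (noninflow_sub net).
Proof.
move=> outflows_in jac.
suff nonneg_codim m k : (k + m)%N = s -> forall (S : 'I_k -> 'I_s) rs,
    is_embedding_data (noninflow_sub net) S rs -> 0 <= orientation (embed S rs).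
  move=> k S rs data; apply: (nonneg_codim (s - k)%N) => //; rewrite subnKC //.
  by case: data => injS _; have := leq_card _ injS; rewrite !card_ord.
elim: m k => [|m IH] k size_k S rs [injS [injrs inG]].
  rewrite addn0 in size_k; subst k; rewrite orientation_perm //.
  by apply: jac => // p; have := inG p; rewrite mem_filter => /andP [].
have lt_ks : (k < s)%N by rewrite -size_k addnS ltnS leq_addr.
have [i fresh_i] := exists_fresh_species injS lt_ks.
case: (boolP [exists p, rs p == outflow i]) => [/existsP [p /eqP rs_p] | no_outflow].
  rewrite (@orientation_gen_inflow _ _ p) //; apply/eqP/ffunP => j.
  by rewrite !ffunE rs_p !ffunE (negbTE (fresh_i j)).
rewrite -(orientation_add_outflow rs fresh_i); apply: IH; first by rewrite addSnnS.
split; last split.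
- exact: extend_inj.
- by apply: extend_inj => // p; move: no_outflow; rewrite negb_exists => /forallP.
- move=> p; case: (unliftP ord_max p) => [p' ->|->]; rewrite ?extend_lift ?extend_max //.
  by rewrite mem_filter outflows_in andbT /is_inflow /= unit_cplx_neq0.
Qed.

Section NegativeNetworks.
Variables (n : nat) (r : 'I_n.+1 -> rxn n.+1).
Hypothesis minors_ge0 : forall p j, 0 <= orientation (sq_minor r p j).
Hypothesis negative : orientation r < 0.

Lemma negative_cond_a : cond_a r.
Proof.
move=> p; apply/negP => degenerate.
suff : 0 <= orientation r by rewrite leNgt negative.
apply: (@degenerate_reaction_nonneg _ _ p minors_ge0).
case/or4P: degenerate => [/outflow_degradation deg | /andP [gen _] | gen | deg].
- by rewrite deg orbT.
- by rewrite /is_gen_inflow gen.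
- by rewrite gen.
- by rewrite deg orbT.
Qed.

Lemma negative_cond_b : (forall p, ~~ self_catalyzing (r p)) -> cond_b r.
Proof.
move=> no_cat j; have nonzero : orientation r != 0 by rewrite ltr0_neq0.
have [p jp | no_p] := pickP (fun p => appears (r p) j); last first.
  case/negP: nonzero; apply/eqP/(@orientation_absent_species _ _ j) => p.
  by have /negbT/not_appears[] := no_p p.
have [q /andP [nqp jq] | only_p] := pickP (fun q => (q != p) && appears (r q) j).
  exists p, q; split => //; first by rewrite eq_sym.
  apply: contra nonzero => /eqP rq.
  by rewrite (orientation_reverse_pair _ rq) // eq_sym.
suff : 0 <= orientation r by rewrite leNgt negative.
rewrite (@orientation_expand_col _ _ p j).
  apply: mulr_ge0 => //; rewrite sgz_ge0 weight_ge0 //.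
  by move: (no_cat p); rewrite negb_exists => /forallP.
by move=> q nqp; have := only_p q; rewrite nqp /= => ->.
Qed.

End NegativeNetworks.

Lemma embed_self_catalyzing s k (S : 'I_k -> 'I_s) (rs : 'I_k -> rxn s) p :
  self_catalyzing (embed S rs p) -> self_catalyzing (rs p).
Proof. by case/existsP => j; rewrite !ffunE => cat_j; apply/existsP; exists (S j). Qed.

(* (3) -> (2): a minimal negative embedded network would satisfy (a), (b). *)
Lemma cond3_all_embedded s (G : seq (rxn s)) : cond3 G -> all_embedded_nonneg G.
Proof.
move=> [no_cat reduced_nonneg]; elim=> [|n IH] S rs data.
  by rewrite /orientation !det_mx00 mulr1 sgzE.
rewrite leNgt; apply/negP => negative.
have minors_ge0 := embedded_minors_nonneg IH data.
have no_cat_embed p : ~~ self_catalyzing (embed S rs p).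
  have [_ [_ inG]] := data.
  by apply: contra (no_cat _ (inG p)); apply: embed_self_catalyzing.
have := reduced_nonneg _ _ _ data (negative_cond_a minors_ge0 negative)
  (negative_cond_b minors_ge0 negative no_cat_embed).
by rewrite leNgt negative.
Qed.

Lemma self_catalyzing_negative s (r : rxn s) j :
  (1 <= r.1 j < r.2 j)%N ->
  orientation (embed (fun _ : 'I_1 => j) (fun _ => r)) < 0.
Proof.
case/andP => pos_j lt_j; rewrite /orientation !det_mx11 !mxE !ffunE.
by rewrite sgz_lt0 pmulr_rlt0 ?ltz_nat // subr_lt0 ltz_nat.
Qed.

(* (2) -> (3); the reduced networks of (3) are in particular embedded. *)
Lemma all_embedded_cond3 s (G : seq (rxn s)) : all_embedded_nonneg G -> cond3 G.
Proof.
move=> nonneg; split=> [r rG | k S rs data _ _]; last exact: nonneg.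
apply/negP => /existsP [j cat_j].
have data1 : is_embedding_data G (fun _ : 'I_1 => j) (fun _ => r).
  by split; [|split] => // a b _; rewrite (ord1 a) (ord1 b).
by have := nonneg _ _ _ data1; rewrite leNgt self_catalyzing_negative.
Qed.

Theorem mainTheorem3 (s : nat) (net : seq (rxn s)) :
  is_CFSTR net ->
  (passes_Jacobian net <-> all_embedded_nonneg (nonflow_sub net)) /\
  (all_embedded_nonneg (nonflow_sub net) <-> cond3 (nonflow_sub net)).
Proof.
move=> [_ outflows_in].
have nonflow_noninflow : {subset nonflow_sub net <= noninflow_sub net}.
  by move=> r; rewrite !mem_filter negb_or => /andP [/andP [-> _] ->].
have noninflow_split r :
    r \in noninflow_sub net -> (r \in nonflow_sub net) || is_outflow r.
  by rewrite !mem_filter /is_flow => /andP [/negbTE -> ->]; case: (is_outflow r).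
split; split.
- move=> jac; apply: all_embedded_sub nonflow_noninflow _.
  exact: jacobian_all_embedded outflows_in jac.
- move=> nonneg; apply: all_embedded_jacobian.
  exact: all_embedded_add_outflows noninflow_split nonneg.
- exact: all_embedded_cond3.
- exact: cond3_all_embedded.
Qed.
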